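(* Let $f=(f_1,f_2):\mathbb{C}^2\to\mathbb{C}^2$ be a generically non-proper polynomial map with support $A=(A_1,A_2)$. Then $A$ has at most one right long relevant face and at most one left long relevant face.
   Context: $A_i=\operatorname{supp}f_i$. A face of a finite set $S\subset\mathbb{Z}^2$ is the set of points of $S$ minimizing $\langle\alpha,\cdot\rangle$ for some $\alpha\in\mathbb{R}^2$ (which supports it); a face of $A$ is a pair $\Gamma=(\Gamma_1,\Gamma_2)$ with $\Gamma_i$ the face of $A_i$ supported by a common $\alpha$. $\Gamma$ is semi-origin if $(0,0)\in\Gamma_1\cup\Gamma_2$; coordinate if every vector supporting it has one coordinate positive and the other zero; relevant if it is semi-origin, not coordinate, and no $\Gamma_i$ is a single point different from $(0,0)$. Supporting vectors $\alpha=(\alpha_1,\alpha_2)$ of relevant faces satisfy $\alpha_1\alpha_2<0$; a relevant face is left if $\alpha_1>0$ and right if $\alpha_1<0$. A face is long if $\dim\mathrm{conv}(\Gamma_1)=\dim\mathrm{conv}(\Gamma_2)=1$. With $V(B_1,B_2):=\mathrm{Vol}(\mathrm{conv}B_1+\mathrm{conv}B_2)-\mathrm{Vol}(\mathrm{conv}B_1)-\mathrm{Vol}(\mathrm{conv}B_2)$ and $\Sigma$ the support of $|\mathrm{Jac} f|$, $f$ is generically non-proper if it is dominant, non-proper (some $y$, $x_k$ with $\|x_k\|\to\infty$, $f(x_k)\to y$), $f(0,0)\in(\mathbb{C}^* )^2$, and the systems $f_1=f_2=0$, $f_1=|\mathrm{Jac} f|=0$, $f_2=|\mathrm{Jac}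 f|=0$ have respectively $V(A_1,A_2)$, $V(A_1,\Sigma)$, $V(A_2,\Sigma)$ isolated solutions in $(\mathbb{C}^* )^2$ (counted with multiplicity). *)

From HB Require Import structures.
From mathcomp Require Import all_boot all_order all_algebra.
From mathcomp Require Import complex.
From mathcomp Require Import boolp classical_sets reals ereal.
From mathcomp Require Import measure lebesgue_measure lebesgue_integral.

Set Implicit Arguments.
Unset Strict Implicit.
Unset Printing Implicit Defensive.
Import Order.TTheory GRing.Theory Num.Theory.
Local Open Scope ring_scope.
Local Open Scope classical_set_scope.

(* Conventions.
   - R : realType is the field of real numbers and C := R[i] the complex numbers.
   - A polynomial in two variables x, y is  g : {poly {poly C}}  where the
     inner variable is x and the outer variable is y: the coefficient of
     x^k y^l is  g`_l`_k.
   - Exponent vectors are pairs (k, l) : nat * nat  (points of Z^2). *)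

Section Defs.
Variable R : realType.
Local Notation C := R[i].
Local Notation P2 := {poly {poly C}}.

Definition eval2 (g : P2) (a b : C) : C := g.[b%:P].[a].

Definition supp (g : P2) : set (nat * nat) := [set s | g`_s.2`_s.1 != 0].

Definition dx (g : P2) : P2 := map_poly (fun c : {poly C} => c^`()) g.
Definition dy (g : P2) : P2 := g^`().
Definition jac (f1 f2 : P2) : P2 := dx f1 * dy f2 - dy f1 * dx f2.

Definition dot (a : R * R) (s : nat * nat) : R := a.1 * s.1%:R + a.2 * s.2%:R.

Definition faceS (S : set (nat * nat)) (a : R * R) : set (nat * nat) :=
  [set s | S s /\ forall t, S t -> dot a s <= dot a t].

Definition supports (A1 A2 : set (nat * nat))
    (G : set (nat * nat) * set (nat * nat)) (a : R * R) : Prop :=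
  faceS A1 a = G.1 /\ faceS A2 a = G.2.

Definition is_face A1 A2 G : Prop := exists a, supports A1 A2 G a.

Definition semi_origin (G : set (nat * nat) * set (nat * nat)) : Prop :=
  G.1 (0, 0)%N \/ G.2 (0, 0)%N.

Definition coordinate_face A1 A2 G : Prop :=
  forall a, supports A1 A2 G a ->
    (0 < a.1 /\ a.2 = 0) \/ (a.1 = 0 /\ 0 < a.2).

Definition single_nonorigin (S : set (nat * nat)) : Prop :=
  exists p, p <> (0, 0)%N /\ S = [set p].

Definition relevant A1 A2 G : Prop :=
  semi_origin G /\ ~ coordinate_face A1 A2 G /\
  ~ single_nonorigin G.1 /\ ~ single_nonorigin G.2.

Definition left_face A1 A2 G : Prop := exists a, supports A1 A2 G a /\ 0 < a.1.
Definition right_face A1 A2 G : Prop := exists a, supports A1 A2 G a /\ a.1 < 0.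

Definition dim_conv_one (S : set (nat * nat)) : Prop :=
  (exists p q, S p /\ S q /\ p <> q) /\
  forall p q r, S p -> S q -> S r ->
    ((q.1%:R - p.1%:R) * (r.2%:R - p.2%:R)
     - (q.2%:R - p.2%:R) * (r.1%:R - p.1%:R) = 0 :> R).

Definition long_face (G : set (nat * nat) * set (nat * nat)) : Prop :=
  dim_conv_one G.1 /\ dim_conv_one G.2.

Definition pt (s : nat * nat) : R * R := (s.1%:R, s.2%:R).

Definition conv (B : set (nat * nat)) : set (R * R) :=
  [set x | exists (n : nat) (p : 'I_n -> nat * nat) (w : 'I_n -> R),
     (forall i, B (p i)) /\ (forall i, 0 <= w i) /\ \sum_(i < n) w i = 1 /\
     x = (\sum_(i < n) w i * (pt (p i)).1, \sum_(i < n) w i * (pt (p i)).2)].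

Definition minkowski (X Y : set (R * R)) : set (R * R) :=
  [set z | exists x y, X x /\ Y y /\ z = (x.1 + y.1, x.2 + y.2)].

Definition area (X : set (R * R)) : \bar R :=
  ((@lebesgue_measure R) \x (@lebesgue_measure R))%E X.

Definition mixed_vol (B1 B2 : set (nat * nat)) : \bar R :=
  (area (minkowski (conv B1) (conv B2)) - area (conv B1) - area (conv B2))%E.

Definition shift2 (g : P2) (a b : C) : P2 :=
  map_poly (fun c : {poly C} => c \Po ('X + a%:P)) (g \Po ('X + (b%:P)%:P)).

(* coefficient of x^k y^l in x^i y^j q, truncated modulo m^N = (x,y)^N *)
Definition trcoef (q : P2) (N : nat) (ij kl : nat * nat) : C :=
  if [&& (kl.1 + kl.2 < N)%N, (ij.1 <= kl.1)%N & (ij.2 <= kl.2)%N]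
  then q`_(kl.2 - ij.2)`_(kl.1 - ij.1) else 0.

Definition mon N := ('I_N * 'I_N)%type.

(* rows: the classes of x^i y^j g and x^i y^j h in C[x,y]/m^N,
   in the monomial basis x^k y^l (k + l < N) *)
Definition jet_mx (g h : P2) (N : nat) :
    'M[C]_(#|{: bool * mon N}|, #|{: mon N}|) :=
  \matrix_(r, c)
    let: (bb, ij) := (enum_val r : bool * mon N) in
    let kl := (enum_val c : mon N) in
    trcoef (if bb then g else h) N (nat_of_ord ij.1, nat_of_ord ij.2)
      (nat_of_ord kl.1, nat_of_ord kl.2).

(* dim_C  C[x,y] / ((g, h) + m_p^N), m_p the maximal ideal of p *)
Definition quot_dim (g h : P2) (p : C * C) (N : nat) : nat :=
  (#|[set kl : mon N | (kl.1 + kl.2 < N)%N]|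
   - \rank (jet_mx (shift2 g p.1 p.2) (shift2 h p.1 p.2) N))%N.

(* the intersection multiplicity of g = h = 0 at an isolated solution p,
   i.e. dim_C of the local ring O_p / (g, h), which equals
   dim_C C[x,y]/((g,h) + m_p^N) for all large N *)
Definition local_mult (g h : P2) (p : C * C) (m : nat) : Prop :=
  exists N0, forall N, (N0 <= N)%N -> quot_dim g h p N = m.

Definition isolated_torus_sol (g h : P2) (p : C * C) : Prop :=
  [/\ p.1 != 0, p.2 != 0, eval2 g p.1 p.2 = 0, eval2 h p.1 p.2 = 0 &
   exists e : C, 0 < e /\ forall q : C * C, `|q.1 - p.1| < e -> `|q.2 - p.2| < e ->
      eval2 g q.1 q.2 = 0 -> eval2 h q.1 q.2 = 0 -> q = p].

Definition num_isolated_sols (g h : P2) (n : nat) : Prop :=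
  exists (s : seq (C * C)) (ms : seq nat),
    [/\ uniq s, forall p, p \in s <-> isolated_torus_sol g h p,
        size ms = size s,
        forall i, (i < size s)%N -> local_mult g h (nth (0, 0) s i) (nth 0%N ms i)
      & sumn ms = n].

Definition has_isolated_count (g h : P2) (V : \bar R) : Prop :=
  exists n : nat, num_isolated_sols g h n /\ V = ((n%:R : R)%:E)%E.

(* dominant : the image is Zariski dense, i.e. no nonzero polynomial vanishes on it *)
Definition dominant (f1 f2 : P2) : Prop :=
  forall G : P2, (forall a b, eval2 G (eval2 f1 a b) (eval2 f2 a b) = 0) -> G = 0.

Definition norm2 (x : C * C) : C := sqrtC (`|x.1| ^+ 2 + `|x.2| ^+ 2).

Definition non_proper (f1 f2 : P2) : Prop :=
  exists (y : C * C) (x : nat -> C * C),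
    (forall M : nat, exists K, forall k, (K <= k)%N -> M%:R < norm2 (x k)) /\
    (forall e : C, 0 < e -> exists K, forall k, (K <= k)%N ->
        `|eval2 f1 (x k).1 (x k).2 - y.1| < e /\ `|eval2 f2 (x k).1 (x k).2 - y.2| < e).

Definition generically_non_proper (f1 f2 : P2) : Prop :=
  [/\ dominant f1 f2, non_proper f1 f2,
      eval2 f1 0 0 != 0 /\ eval2 f2 0 0 != 0 &
      [/\ has_isolated_count f1 f2 (mixed_vol (supp f1) (supp f2)),
          has_isolated_count f1 (jac f1 f2) (mixed_vol (supp f1) (supp (jac f1 f2)))
        & has_isolated_count f2 (jac f1 f2) (mixed_vol (supp f2) (supp (jac f1 f2)))]].

End Defs.

From HB Require Import structures.
From mathcomp Require Import all_boot all_order all_algebra.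
From mathcomp Require Import complex.
From mathcomp Require Import boolp classical_sets reals ereal.
From mathcomp Require Import measure lebesgue_measure lebesgue_integral.
From mathcomp Require Import ring lra.

Set Implicit Arguments.
Unset Strict Implicit.
Unset Printing Implicit Defensive.
Import Order.TTheory GRing.Theory Num.Theory.

Local Open Scope ring_scope.
Local Open Scope classical_set_scope.

(* If the origin lies in the face of A_j supported by b, then every nonzero
   point x of the face of A_j supported by a satisfies <a, x> <= 0 <= <b, x>.
   Long semi-origin faces G (supported by a) and G' (supported by b) therefore
   provide two nonzero points x, y of N^2 with <a, x> <= 0 <= <b, x> and
   <b, y> <= 0 <= <a, y>.  When a_1 and b_1 have the same sign, both points
   have positive second coordinate, and comparing the two inequalities
   forces a and b to be positively proportional, so G = G'. *)

Section SemiOriginFaces.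
Variable R : realType.
Implicit Types (S : set (nat * nat)) (a b : R * R) (x y : nat * nat).

Lemma dot0 a : dot a (0, 0)%N = 0.
Proof. by rewrite /dot /= !mulr0 addr0. Qed.

Lemma dotZ (k : R) a x : dot (k * a.1, k * a.2) x = k * dot a x.
Proof. by rewrite /dot /=; ring. Qed.

Lemma faceSZ S (k : R) a : 0 < k -> faceS S (k * a.1, k * a.2) = faceS S a.
Proof.
move=> k_gt0; apply/seteqP; split=> x [Sx min_x]; split=> // t St.
- by rewrite -(ler_pM2l k_gt0) -!dotZ; apply: min_x.
- by rewrite !dotZ ler_pM2l //; apply: min_x.
Qed.

Lemma faceS_parallel S a b :
  0 < a.1 * b.1 -> a.1 * b.2 = a.2 * b.1 -> faceS S b = faceS S a.
Proof.
move=> ab_gt0 ab_par.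
have a1_neq0 : a.1 != 0 by apply: contraTneq ab_gt0 => ->; rewrite mul0r ltxx.
have k_gt0 : 0 < b.1 / a.1.
  have -> : b.1 / a.1 = a.1 * b.1 / a.1 ^+ 2 by field.
  by rewrite divr_gt0 // lt_def sqrf_eq0 a1_neq0 sqr_ge0.
rewrite -(faceSZ S a k_gt0); congr faceS; rewrite [LHS]surjective_pairing.
congr (_, _); first by field.
by apply: (mulfI a1_neq0); rewrite ab_par; field.
Qed.

Lemma faceS_dot_le0 S a x : S (0, 0)%N -> faceS S a x -> dot a x <= 0.
Proof. by move=> S0 [_ min_x]; rewrite -(dot0 a); apply: min_x. Qed.

Lemma faceS0_dot_ge0 S a x : faceS S a (0, 0)%N -> S x -> 0 <= dot a x.
Proof. by move=> [_ min0] Sx; rewrite -(dot0 a); apply: min0. Qed.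

Lemma dim_conv_one_nonzero S : dim_conv_one R S -> exists2 x, S x & x <> (0, 0)%N.
Proof.
move=> [[p [q [Sp [Sq p_neq_q]]]] _].
have [p0|] := pselect (p = (0, 0)%N); last by exists p.
by exists q => // q0; apply: p_neq_q; rewrite p0 q0.
Qed.

Lemma separating_point S a b :
  dim_conv_one R (faceS S a) -> faceS S b (0, 0)%N ->
  exists2 x, x <> (0, 0)%N & dot a x <= 0 <= dot b x.
Proof.
move=> /dim_conv_one_nonzero [x ax x_neq0] b0; exists x => //.
by rewrite (faceS_dot_le0 b0.1 ax) (faceS0_dot_ge0 b0 ax.1).
Qed.

Lemma separated_snd_gt0 a b x : 0 < a.1 * b.1 -> x <> (0, 0)%N ->
  dot a x <= 0 <= dot b x -> 0 < x.2%:R :> R.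
Proof.
case: x => m n ab_gt0 x_neq0 /andP[ax bx]; rewrite ltr0n lt0n /=.
apply/negP => /eqP n0; move: ax bx; rewrite /dot n0 /= !mulr0 !addr0.
have m_gt0 : 0 < m%:R :> R.
  by rewrite ltr0n lt0n; apply/negP => /eqP m0; apply: x_neq0; rewrite m0 n0.
have abmm_gt0 : 0 < a.1 * b.1 * (m%:R * m%:R) by apply: mulr_gt0 => //; apply: mulr_gt0.
by move=> ax bx; nra.
Qed.

Lemma separated_parallel a b x y : 0 < a.1 * b.1 ->
  x <> (0, 0)%N -> dot a x <= 0 <= dot b x ->
  y <> (0, 0)%N -> dot b y <= 0 <= dot a y ->
  a.1 * b.2 = a.2 * b.1.
Proof.
move=> ab_gt0 x_neq0 hx y_neq0 hy.
have x2_gt0 := separated_snd_gt0 ab_gt0 x_neq0 hx.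
have y2_gt0 : 0 < y.2%:R :> R by apply: (separated_snd_gt0 _ y_neq0 hy); rewrite mulrC.
have a1_neq0 : a.1 != 0 by apply: contraTneq ab_gt0 => ->; rewrite mul0r ltxx.
have cross z : a.1 * (a.1 * b.2 - a.2 * b.1) * z.2%:R
               = a.1 ^+ 2 * dot b z - a.1 * b.1 * dot a z.
  by rewrite /dot; ring.
move: hx hy => /andP[ax bx] /andP[by_ ay].
have D_ge0 : 0 <= a.1 * (a.1 * b.2 - a.2 * b.1).
  rewrite -(pmulr_lge0 _ x2_gt0) cross subr_ge0 (@le_trans _ _ 0) //.
    by rewrite pmulr_rle0.
  by rewrite mulr_ge0 ?sqr_ge0.
have D_le0 : a.1 * (a.1 * b.2 - a.2 * b.1) <= 0.
  rewrite -(pmulr_lle0 _ y2_gt0) cross subr_le0 (@le_trans _ _ 0) //.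
    by rewrite mulr_ge0_le0 ?sqr_ge0.
  by rewrite pmulr_rge0.
have /eqP : a.1 * (a.1 * b.2 - a.2 * b.1) = 0 by apply/le_anti; rewrite D_le0 D_ge0.
by rewrite mulf_eq0 (negbTE a1_neq0) subr_eq0 => /eqP.
Qed.

Lemma semi_origin_separating_point A1 A2 G G' a b :
  supports A1 A2 G a -> supports A1 A2 G' b -> long_face R G -> semi_origin G' ->
  exists2 x, x <> (0, 0)%N & dot a x <= 0 <= dot b x.
Proof.
case: G G' => [G1 G2] [G1' G2'] [/= <- <-] [/= <- <-] [/= long1 long2] [/= b0|/= b0].
  exact: separating_point long1 b0.
exact: separating_point long2 b0.
Qed.

Lemma long_semi_origin_faces_eq A1 A2 G G' a b :
  supports A1 A2 G a -> supports A1 A2 G' b -> 0 < a.1 * b.1 ->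
  semi_origin G -> semi_origin G' -> long_face R G -> long_face R G' -> G = G'.
Proof.
move=> Ga G'b ab_gt0 soG soG' longG longG'.
have [x x_neq0 hx] := semi_origin_separating_point Ga G'b longG soG'.
have [y y_neq0 hy] := semi_origin_separating_point G'b Ga longG' soG.
have ab_par := separated_parallel ab_gt0 x_neq0 hx y_neq0 hy.
case: G G' Ga G'b {soG soG' longG longG'} => [G1 G2] [G1' G2'] [/= <- <-] [/= <- <-].
by rewrite (faceS_parallel A1 ab_gt0 ab_par) (faceS_parallel A2 ab_gt0 ab_par).
Qed.

End SemiOriginFaces.

(* Only the semi-origin and long conditions and the sign of the first
   coordinate of the supporting vectors are needed. *)
Theorem lemma5p3 (R : realType) (f1 f2 : {poly {poly R[i]}}) :
  generically_non_proper f1 f2 ->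
  (forall G G' : set (nat * nat) * set (nat * nat),
     is_face R (supp f1) (supp f2) G -> relevant R (supp f1) (supp f2) G ->
     long_face R G -> right_face R (supp f1) (supp f2) G ->
     is_face R (supp f1) (supp f2) G' -> relevant R (supp f1) (supp f2) G' ->
     long_face R G' -> right_face R (supp f1) (supp f2) G' ->
     G = G') /\
  (forall G G' : set (nat * nat) * set (nat * nat),
     is_face R (supp f1) (supp f2) G -> relevant R (supp f1) (supp f2) G ->
     long_face R G -> left_face R (supp f1) (supp f2) G ->
     is_face R (supp f1) (supp f2) G' -> relevant R (supp f1) (supp f2) G' ->
     long_face R G' -> left_face R (supp f1) (supp f2) G' ->
     G = G').
Proof.
move=> _; split=> G G' _ [soG _] longG [a [Ga a1]] _ [soG' _] longG' [b [G'b b1]].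
- apply: (long_semi_origin_faces_eq Ga G'b) => //; by rewrite nmulr_rgt0.
- apply: (long_semi_origin_faces_eq Ga G'b) => //; exact: mulr_gt0.
Qed.
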